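(* Let $\mathcal{H}$ be a complex Hilbert space and let $T, S\in\mathbb{B}(\mathcal{H})$. If $N(\cdot)$ is an algebra norm on $\mathbb{B}(\mathcal{H})$, then for each choice of sign, $$w_{N}(TS \pm ST^* ) \leq w_{N}(S)\big(N(T) + N(T^* )\big).$$ In particular, if $N(\cdot)$ is a self-adjoint algebra norm, then $w_{N}(TS \pm ST^* ) \leq 2w_{N}(S)N(T)$.
   Context: $\mathbb{B}(\mathcal{H})$ is the algebra of bounded linear operators on $\mathcal{H}$. A norm $N(\cdot)$ on $\mathbb{B}(\mathcal{H})$ is an algebra norm if $N(TS)\le N(T)N(S)$ for all $T,S$, and is self-adjoint if $N(T^* )=N(T)$ for all $T$. For $A\in\mathbb{B}(\mathcal{H})$, ${\rm Re}(A)=\frac{A+A^*}{2}$. The generalized numerical radius is $w_N(T)=\sup_{\theta\in\mathbb{R}} N\big({\rm Re}(e^{i\theta}T)\big)$. *)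

From HB Require Import structures.
From mathcomp Require Import all_boot all_order all_algebra.
From mathcomp Require Import complex.
From mathcomp Require Import boolp classical_sets reals trigo.
From Stdlib Require Import ClassicalEpsilon.
Set Implicit Arguments. Unset Strict Implicit. Unset Printing Implicit Defensive.
Import Order.TTheory GRing.Theory Num.Theory.
Local Open Scope ring_scope.
Local Open Scope complex_scope.

Record hilbert_space (R : realType) (V : lmodType R[i]) := HilbertSpace {
  ip : V -> V -> R[i];
  ipDl : forall x y z, ip (x + y) z = ip x z + ip y z;
  ipZl : forall (a : R[i]) x y, ip (a *: x) y = a * ip x y;
  ip_conj : forall x y, ip y x = conjc (ip x y);
  ip_ge0 : forall x, 0 <= ip x x;
  ip_eq0 : forall x, ip x x = 0 -> x = 0;
  ip_complete : forall u : nat -> V,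
    (forall e : R, 0 < e -> exists M : nat, forall m n : nat, (M <= m)%N -> (M <= n)%N ->
        Num.sqrt (complex.Re (ip (u m - u n) (u m - u n))) < e) ->
    exists l : V, forall e : R, 0 < e -> exists M : nat, forall n : nat, (M <= n)%N ->
        Num.sqrt (complex.Re (ip (u n - l) (u n - l))) < e
}.

Section Ops.
Variables (R : realType) (V : lmodType R[i]) (H : hilbert_space V).

Definition hnorm (x : V) : R := Num.sqrt (complex.Re (ip H x x)).

Definition bounded_op (T : V -> V) : Prop :=
  (forall x y, T (x + y) = T x + T y) /\
  (forall (a : R[i]) x, T (a *: x) = a *: T x) /\
  (exists M : R, forall x, hnorm (T x) <= M * hnorm x).

Definition op_add (T S : V -> V) : V -> V := fun x => T x + S x.
Definition op_opp (T : V -> V) : V -> V := fun x => - T x.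
Definition op_scale (a : R[i]) (T : V -> V) : V -> V := fun x => a *: T x.
Definition op_mul (T S : V -> V) : V -> V := fun x => T (S x).

Definition is_adjoint (T A : V -> V) : Prop :=
  forall x y, ip H (T x) y = ip H x (A y).
Definition adj (T : V -> V) : V -> V :=
  epsilon (inhabits (fun x : V => x)) (is_adjoint T).

Definition ReOp (A : V -> V) : V -> V :=
  op_scale (2%:R)^-1 (op_add A (adj A)).

(* a norm N on B(H) which is an algebra norm (values of N outside B(H) are
   irrelevant) *)
Definition algebra_norm (N : (V -> V) -> R) : Prop :=
  (forall T, bounded_op T -> 0 <= N T) /\
  (forall T, bounded_op T -> N T = 0 -> T = (fun _ => 0)) /\
  (forall a T, bounded_op T -> N (op_scale a T) = ComplexField.Normc.normc a * N T) /\
  (forall T S, bounded_op T -> bounded_op S -> N (op_add T S) <= N T + N S) /\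
  (forall T S, bounded_op T -> bounded_op S -> N (op_mul T S) <= N T * N S).

Definition selfadjoint_norm (N : (V -> V) -> R) : Prop :=
  forall T, bounded_op T -> N (adj T) = N T.

Definition expi (t : R) : R[i] := (cos t) +i* (sin t).

Definition wN (N : (V -> V) -> R) (T : V -> V) : R :=
  sup [set N (ReOp (op_scale (expi t) T)) | t in [set: R]].

End Ops.

(* Writing X t = Re (e^{it} S), one has Re (e^{it} (TS + S T^* )) = T (X t) + (X t) T^* ,
   so the triangle inequality and submultiplicativity of N bound every term of
   the supremum defining w_N(TS + S T^* ) by w_N(S) (N(T) + N(T^* )).  The sign
   "-" reduces to "+" for iT in place of T, because (iT) S + S (iT)^* equals
   i (TS - S T^* ) and w_N is invariant under multiplication by e^{is}.
   Since the adjoint is given by choice, we first need that bounded operators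
   have adjoints: this is the Riesz representation theorem, proved as usual by
   showing that a norm-minimizing sequence on the hyperplane f = 1 is Cauchy
   (parallelogram law) and that its limit is orthogonal to ker f. *)

From mathcomp Require Import all_boot all_order all_algebra.
From mathcomp Require Import complex.
From mathcomp Require Import boolp classical_sets reals trigo.
From mathcomp Require Import ring lra.
From Stdlib Require Import ClassicalEpsilon.
Set Implicit Arguments. Unset Strict Implicit. Unset Printing Implicit Defensive.
Import Order.TTheory GRing.Theory Num.Theory.
Local Open Scope ring_scope.
Local Open Scope complex_scope.
Local Open Scope classical_set_scope.

Local Notation normc := (@ComplexField.Normc.normc _).

Lemma normc_ge0 (R : rcfType) (z : R[i]) : 0 <= normc z.
Proof. by case: z => a b; apply: sqrtr_ge0. Qed.

Lemma normc_real (R : rcfType) (r : R) : normc r%:C = `|r|.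
Proof. by rewrite /= expr0n addr0 sqrtr_sqr. Qed.

Lemma mulcJ (R : rcfType) (z : R[i]) : z * conjc z = (normc z ^+ 2)%:C.
Proof.
case: z => a b /=; rewrite sqr_sqrtr ?addr_ge0 ?sqr_ge0 //.
by simpc; congr (_ +i* _); ring.
Qed.

Lemma normc_nat (R : rcfType) (n : nat) : normc (n%:R : R[i]) = n%:R.
Proof. by rewrite -(rmorph_nat (real_complex R)) normc_real ger0_norm. Qed.

Lemma expiD (R : realType) (s t : R) : expi (s + t) = expi s * expi t.
Proof. by rewrite /expi cosD sinD [RHS]/GRing.mul /=; congr (_ +i* _); ring. Qed.

Lemma expi_pihalf (R : realType) : expi (pi / 2%:R) = 'i :> R[i].
Proof. by rewrite /expi cos_pihalf sin_pihalf. Qed.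

Lemma normc_expi (R : realType) (t : R) : normc (expi t) = 1.
Proof. by rewrite /= cos2Dsin2 sqrtr1. Qed.

Lemma normc_conjc (R : rcfType) (z : R[i]) : normc (conjc z) = normc z.
Proof. by case: z => a b /=; rewrite sqrrN. Qed.

Lemma normc_i (R : rcfType) : normc ('i : R[i]) = 1.
Proof. by rewrite /= expr0n expr1n add0r sqrtr1. Qed.

Lemma conjc_i (R : rcfType) : conjc ('i : R[i]) = - 'i.
Proof. by rewrite [RHS]/GRing.opp /= oppr0. Qed.

Lemma eventually_inv_lt (R : archiRealFieldType) (c : R) : 0 < c ->
  exists N, forall n, (N <= n)%N -> n.+1%:R^-1 < c.
Proof.
move=> c_gt0; exists (Num.Def.archi_bound c^-1) => n hn.
rewrite -[c]invrK ltf_pV2 ?posrE ?invr_gt0 //.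
apply: (lt_le_trans (archi_boundP _)); first by rewrite invr_ge0 ltW.
by rewrite ler_nat (leq_trans hn).
Qed.

Section InnerProduct.
Variables (R : realType) (V : lmodType R[i]) (H : hilbert_space V).
Local Notation ip := (ip H).
Local Notation hnorm := (hnorm H).

Definition sqnorm (x : V) : R := complex.Re (ip x x).

Lemma ipDr x y z : ip x (y + z) = ip x y + ip x z.
Proof. by rewrite ip_conj ipDl rmorphD /= -!ip_conj. Qed.

Lemma ipZr (a : R[i]) x y : ip x (a *: y) = conjc a * ip x y.
Proof. by rewrite ip_conj ipZl rmorphM /= -ip_conj. Qed.

Lemma ip0l y : ip 0 y = 0.
Proof. by rewrite -(scale0r (0 : V)) ipZl mul0r. Qed.

Lemma ip0r y : ip y 0 = 0.
Proof. by rewrite ip_conj ip0l conjc0. Qed.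

Lemma ipNl x y : ip (- x) y = - ip x y.
Proof. by rewrite -scaleN1r ipZl mulN1r. Qed.

Lemma ipNr x y : ip x (- y) = - ip x y.
Proof. by rewrite ip_conj ipNl rmorphN /= -ip_conj. Qed.

Lemma ipBl x y z : ip (x - y) z = ip x z - ip y z.
Proof. by rewrite ipDl ipNl. Qed.

Lemma ipBr x y z : ip x (y - z) = ip x y - ip x z.
Proof. by rewrite ipDr ipNr. Qed.

Lemma ip_eqr u v : (forall x, ip x u = ip x v) -> u = v.
Proof.
move=> huv; apply/eqP; rewrite -subr_eq0; apply/eqP; apply: (@ip_eq0 _ _ H).
by rewrite ipBr huv subrr.
Qed.

Lemma ip_sqnorm x : ip x x = (sqnorm x)%:C.
Proof.
by have := ger0_Im (ip_ge0 H x); rewrite /sqnorm; case: (ip x x) => a b /= ->.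
Qed.

Lemma sqnorm_ge0 x : 0 <= sqnorm x.
Proof. by have := ip_ge0 H x; rewrite ip_sqnorm lecR. Qed.

Lemma sqnorm_eq0 x : sqnorm x = 0 -> x = 0.
Proof. by move=> hx; apply: (@ip_eq0 _ _ H); rewrite ip_sqnorm hx. Qed.

Lemma sqnormZ (a : R[i]) x : sqnorm (a *: x) = normc a ^+ 2 * sqnorm x.
Proof.
have : ip (a *: x) (a *: x) = a * conjc a * ip x x by rewrite ipZl ipZr mulrA.
by rewrite mulcJ !ip_sqnorm -rmorphM => -[].
Qed.

Lemma sqnorm_gt0 x : sqnorm x != 0 -> 0 < sqnorm x.
Proof. by rewrite lt_def => ->; rewrite sqnorm_ge0. Qed.

Lemma hnorm_ge0 x : 0 <= hnorm x.
Proof. exact: sqrtr_ge0. Qed.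

Lemma hnorm_sqr x : hnorm x ^+ 2 = sqnorm x.
Proof. by rewrite sqr_sqrtr ?sqnorm_ge0. Qed.

Lemma hnormZ (a : R[i]) x : hnorm (a *: x) = normc a * hnorm x.
Proof.
by rewrite /hnorm -/(sqnorm _) sqnormZ sqrtrM ?sqr_ge0 // sqrtr_sqr ger0_norm ?normc_ge0.
Qed.

Lemma sqnorm_proj x y : sqnorm y != 0 ->
  sqnorm (x - (ip x y / ip y y) *: y) = sqnorm x - normc (ip x y) ^+ 2 / sqnorm y.
Proof.
move=> y0; have yy0 : ip y y != 0 by rewrite ip_sqnorm; apply: contra y0 => /eqP[->].
suff : ip (x - (ip x y / ip y y) *: y) (x - (ip x y / ip y y) *: y)
       = ip x x - ip x y * conjc (ip x y) / ip y y.
  by rewrite mulcJ !ip_sqnorm -rmorphV ?unitfE // -rmorphM -rmorphB => -[].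
rewrite ipBl !ipBr !ipZl !ipZr rmorphM /= conjc_inv.
rewrite (ip_sqnorm y) conjc_real -(ip_sqnorm y).
by rewrite (ip_conj H x y); field.
Qed.

Lemma normc_ip_le x y : normc (ip x y) <= hnorm x * hnorm y.
Proof.
have [y0|y0] := eqVneq (sqnorm y) 0.
  by rewrite (sqnorm_eq0 y0) ip0r ComplexField.Normc.normc0 mulr_ge0 ?hnorm_ge0.
rewrite -[normc _]ger0_norm ?normc_ge0 // -sqrtr_sqr -sqrtrM ?sqnorm_ge0 //.
apply: ler_wsqrtr; rewrite -ler_pdivrMr ?sqnorm_gt0 // -subr_ge0 -sqnorm_proj //.
exact: sqnorm_ge0.
Qed.

Lemma parallelogram x y :
  sqnorm (x + y) + sqnorm (x - y) = 2%:R * sqnorm x + 2%:R * sqnorm y.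
Proof.
have : ip (x + y) (x + y) + ip (x - y) (x - y) = 2%:R * ip x x + 2%:R * ip y y.
  by rewrite !ipDl !ipNl !ipDr !ipNr; ring.
rewrite !ip_sqnorm -(rmorph_nat (real_complex R)) -!rmorphM -!rmorphD.
by move=> -[].
Qed.

Lemma sqnormD_le x y : sqnorm (x + y) <= 2%:R * (sqnorm x + sqnorm y).
Proof. by rewrite mulrDr -parallelogram lerDl sqnorm_ge0. Qed.

End InnerProduct.

Section Riesz.
Variables (R : realType) (V : lmodType R[i]) (H : hilbert_space V).
Local Notation ip := (ip H).
Local Notation hnorm := (hnorm H).
Local Notation sqnorm := (sqnorm H).

Variables (f : V -> R[i]) (M : R).
Hypotheses (fD : forall x y, f (x + y) = f x + f y)
           (fZ : forall a x, f (a *: x) = a * f x)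
           (M_gt0 : 0 < M) (f_bounded : forall x, normc (f x) <= M * hnorm x).

Let fB x y : f (x - y) = f x - f y.
Proof. by rewrite fD -scaleN1r fZ mulN1r. Qed.

Let D := inf [set sqnorm x | x in [set x | f x = 1]].

Lemma sqnorm_ge_inf x : f x = 1 -> D <= sqnorm x.
Proof.
move=> fx; apply: ge_inf; last by exists x.
by exists 0 => _ [y _ <-]; apply: sqnorm_ge0.
Qed.

Lemma exists_minimizing_seq : (exists x, f x = 1) ->
  exists xs : nat -> V, forall n, f (xs n) = 1 /\ sqnorm (xs n) < D + n.+1%:R^-1.
Proof.
move=> [x1 fx1].
suff /choice : forall n : nat, exists x, f x = 1 /\ sqnorm x < D + n.+1%:R^-1 by [].
move=> n; have infD : has_inf [set sqnorm x | x in [set x | f x = 1]].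
  by split; [exists (sqnorm x1), x1 | exists 0 => _ [y _ <-]; apply: sqnorm_ge0].
have n_gt0 : 0 < n.+1%:R^-1 :> R by rewrite invr_gt0.
by have [_ [x fx <-] ?] := inf_adherent n_gt0 infD; exists x.
Qed.

Section MinimizingSequence.
Variable xs : nat -> V.
Hypotheses (xs1 : forall n, f (xs n) = 1)
           (xs_min : forall n, sqnorm (xs n) < D + n.+1%:R^-1).

Lemma minimizing_seq_cauchy m n :
  sqnorm (xs m - xs n) <= 2%:R * (m.+1%:R^-1 + n.+1%:R^-1).
Proof.
have mid : D <= sqnorm (2%:R^-1 *: (xs m + xs n)).
  by apply: sqnorm_ge_inf; rewrite fZ fD !xs1 -mulr2n mulVf // pnatr_eq0.
rewrite sqnormZ ComplexField.Normc.normcV normc_nat expr2 in mid.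
have := parallelogram H (xs m) (xs n); have := xs_min m; have := xs_min n.
move: (n.+1%:R^-1) (m.+1%:R^-1) => a b; lra.
Qed.

Lemma minimizing_seq_cvg : exists z, forall e, 0 < e ->
  exists N, forall n, (N <= n)%N -> hnorm (xs n - z) < e.
Proof.
have [e e_gt0|z xs_cvg] := @ip_complete _ _ H xs; last by exists z.
have e2_gt0 : 0 < e ^+ 2 / 4%:R by rewrite divr_gt0 ?exprn_gt0.
have [N hN] := eventually_inv_lt e2_gt0.
exists N => m n hm hn; rewrite -/(hnorm _) -[e]ger0_norm ?ltW // -sqrtr_sqr.
rewrite ltr_sqrt ?exprn_gt0 //; apply: le_lt_trans (minimizing_seq_cauchy m n) _.
have := hN m hm; have := hN n hn.
move: (n.+1%:R^-1) (m.+1%:R^-1) => a b; lra.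
Qed.

Lemma normc_ip_minimizing_seq_lt n k : f k = 0 -> sqnorm k != 0 ->
  normc (ip (xs n) k) ^+ 2 < n.+1%:R^-1 * sqnorm k.
Proof.
move=> fk k0; rewrite -ltr_pdivrMr ?sqnorm_gt0 //.
have := @sqnorm_ge_inf (xs n - (ip (xs n) k / ip k k) *: k).
rewrite fB fZ fk mulr0 subr0 xs1 sqnorm_proj // => /(_ erefl).
have := xs_min n; move: (n.+1%:R^-1) => a; lra.
Qed.

Variable z : V.
Hypothesis xs_cvg : forall e, 0 < e ->
  exists N, forall n, (N <= n)%N -> hnorm (xs n - z) < e.

Lemma f_lim_eq1 : f z = 1.
Proof.
apply/eqP; rewrite -subr_eq0; apply/eqP/ComplexField.Normc.eq0_normc/le_anti.
rewrite normc_ge0 andbT; apply/ler_addgt0Pr => e e_gt0; rewrite add0r.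
have [N hN] := xs_cvg (divr_gt0 e_gt0 M_gt0).
have -> : f z - 1 = - f (xs N - z) by rewrite fB xs1 opprB.
rewrite normcN; apply: le_trans (f_bounded _) _.
by rewrite -ler_pdivlMl // mulrC ltW // hN.
Qed.

Lemma lim_orthogonal_ker k : f k = 0 -> ip z k = 0.
Proof.
move=> fk; have [k0|k0] := eqVneq (sqnorm k) 0; first by rewrite (sqnorm_eq0 k0) ip0r.
have k_gt0 : 0 < hnorm k by rewrite sqrtr_gt0 sqnorm_gt0.
apply/ComplexField.Normc.eq0_normc/le_anti; rewrite normc_ge0 andbT.
apply/ler_addgt0Pr => e e_gt0; rewrite add0r.
have e2_gt0 : 0 < e / 2%:R by rewrite divr_gt0.
have [N1 hN1] := eventually_inv_lt (divr_gt0 (exprn_gt0 2 e2_gt0) (sqnorm_gt0 k0)).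
have [N2 hN2] := xs_cvg (divr_gt0 e2_gt0 k_gt0).
pose n := maxn N1 N2.
have lt1 : normc (ip (xs n) k) < e / 2%:R.
  rewrite -(ltr_pXn2r (_ : 0 < 2)%N) ?nnegrE ?normc_ge0 ?ltW //.
  apply: lt_trans (normc_ip_minimizing_seq_lt n fk k0) _.
  by rewrite -ltr_pdivlMr ?sqnorm_gt0 // hN1 ?leq_maxl.
have lt2 : normc (ip (xs n - z) k) < e / 2%:R.
  apply: le_lt_trans (normc_ip_le _ _ _) _.
  by rewrite -ltr_pdivlMr // hN2 ?leq_maxr.
have -> : ip z k = ip (xs n) k - ip (xs n - z) k by rewrite ipBl opprB addrC subrK.
apply: le_trans (le_normcD _ _) _; rewrite normcN; lra.
Qed.
End MinimizingSequence.

Lemma riesz_representation : exists y, forall x, f x = ip x y.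
Proof.
have [f0|/existsNP[x0 fx0]] := pselect (forall x, f x = 0).
  by exists 0 => x; rewrite ip0r f0.
have [xs xsP] : exists xs : nat -> V,
    forall n, f (xs n) = 1 /\ sqnorm (xs n) < D + n.+1%:R^-1.
  apply: exists_minimizing_seq; exists ((f x0)^-1 *: x0).
  by rewrite fZ mulVf //; apply/eqP.
have xs1 n := (xsP n).1; have xs_min n := (xsP n).2.
have [z xs_cvg] := minimizing_seq_cvg xs1 xs_min.
have fz : f z = 1 := f_lim_eq1 xs1 xs_cvg.
have zz0 : ip z z != 0.
  apply: contraPneq fz => /(@ip_eq0 _ _ H) ->.
  by rewrite -(scale0r 0) fZ mul0r => /eqP; rewrite eq_sym oner_eq0.
exists ((ip z z)^-1 *: z) => x.
have /eqP : ip (x - f x *: z) z = 0.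
  rewrite ip_conj (lim_orthogonal_ker xs1 xs_min xs_cvg) ?conjc0 //.
  by rewrite fB fZ fz mulr1 subrr.
rewrite ipBl ipZl subr_eq0 => /eqP xz.
by rewrite ipZr conjc_inv ip_sqnorm conjc_real -ip_sqnorm xz mulrC mulfK.
Qed.

End Riesz.

Section Adjoint.
Variables (R : realType) (V : lmodType R[i]) (H : hilbert_space V).
Local Notation ip := (ip H).
Local Notation hnorm := (hnorm H).
Local Notation sqnorm := (sqnorm H).
Local Notation bounded_op := (bounded_op H).
Local Notation adj := (adj H).

Lemma bounded_op_bound T : bounded_op T ->
  exists2 M, 0 <= M & forall x, hnorm (T x) <= M * hnorm x.
Proof.
move=> [_ [_ [M hM]]]; exists `|M| => // x.
by apply: le_trans (hM x) _; rewrite ler_wpM2r ?hnorm_ge0 ?ler_norm.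
Qed.

Lemma bounded_opD T S : bounded_op T -> bounded_op S -> bounded_op (op_add T S).
Proof.
move=> hT hS; have [MT MT0 hMT] := bounded_op_bound hT.
have [MS MS0 hMS] := bounded_op_bound hS.
case: hT hS => [TD [TZ _]] [SD [SZ _]]; split; [|split].
- by move=> x y; rewrite /op_add TD SD addrACA.
- by move=> a x; rewrite /op_add TZ SZ scalerDr.
exists (Num.sqrt (2%:R * (MT ^+ 2 + MS ^+ 2))) => x.
rewrite /hnorm -sqrtrM ?mulr_ge0 ?addr_ge0 ?sqr_ge0 //; apply: ler_wsqrtr.
apply: le_trans (sqnormD_le _ _ _) _; rewrite -mulrA ler_wpM2l // mulrDl.
rewrite -/(sqnorm x) -!hnorm_sqr -!exprMn.
by apply: lerD; apply: lerXn2r; rewrite ?nnegrE ?mulr_ge0 ?hnorm_ge0.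
Qed.

Lemma bounded_opM T S : bounded_op T -> bounded_op S -> bounded_op (op_mul T S).
Proof.
move=> hT hS; have [MT MT0 hMT] := bounded_op_bound hT.
have [MS MS0 hMS] := bounded_op_bound hS.
case: hT hS => [TD [TZ _]] [SD [SZ _]]; split; [|split].
- by move=> x y; rewrite /op_mul SD TD.
- by move=> a x; rewrite /op_mul SZ TZ.
exists (MT * MS) => x; rewrite /op_mul -mulrA.
by apply: le_trans (hMT _) _; rewrite ler_wpM2l.
Qed.

Lemma bounded_opZ a T : bounded_op T -> bounded_op (op_scale a T).
Proof.
move=> hT; have [M M0 hM] := bounded_op_bound hT.
case: hT => [TD [TZ _]]; split; [|split].
- by move=> x y; rewrite /op_scale TD scalerDr.
- by move=> b x; rewrite /op_scale TZ !scalerA mulrC.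
exists (normc a * M) => x; rewrite /op_scale hnormZ -mulrA.
by rewrite ler_wpM2l ?normc_ge0.
Qed.

Lemma adj_op_unique T A : is_adjoint H T A -> adj T = A.
Proof.
move=> hA; have hadj : is_adjoint H T (adj T) by apply: epsilon_spec; exists A.
by apply: funext => y; apply: (@ip_eqr _ _ H) => x; rewrite -hadj hA.
Qed.

Lemma adj_opP T : bounded_op T -> is_adjoint H T (adj T).
Proof.
move=> hT; apply: epsilon_spec; have [M M0 hM] := bounded_op_bound hT.
case: hT => [TD [TZ _]].
suff /choice[A hA] : forall y, exists y', forall x, ip (T x) y = ip x y'.
  by exists A.
move=> y.
apply: (@riesz_representation _ _ H (fun x => ip (T x) y) (M * hnorm y + 1)).
- by move=> x1 x2; rewrite TD ipDl.
- by move=> a x; rewrite TZ ipZl.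
- by rewrite ltr_pwDr // mulr_ge0 ?hnorm_ge0.
move=> x; apply: le_trans (normc_ip_le _ _ _) _.
have := hM x; have := hnorm_ge0 H x; have := hnorm_ge0 H y.
have := hnorm_ge0 H (T x); nra.
Qed.

Lemma bounded_op_adj T : bounded_op T -> bounded_op (adj T).
Proof.
move=> hT; have hA := adj_opP hT; have [M M0 hM] := bounded_op_bound hT.
split; [|split].
- by move=> y z; apply: (@ip_eqr _ _ H) => x; rewrite ipDr -!hA ipDr.
- by move=> a y; apply: (@ip_eqr _ _ H) => x; rewrite ipZr -!hA ipZr.
exists M => y; set u := adj T y.
have [u0|u_gt0] := eqVneq (hnorm u) 0; first by rewrite u0 mulr_ge0 ?hnorm_ge0.
rewrite -(ler_pM2l (_ : 0 < hnorm u)); last by rewrite lt_def u_gt0 hnorm_ge0.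
have : normc (ip u u) <= hnorm (T u) * hnorm y by rewrite {2}/u -hA normc_ip_le.
rewrite ip_sqnorm normc_real ger0_norm ?sqnorm_ge0 // -hnorm_sqr expr2 => uu.
apply: le_trans uu _; rewrite mulrA [_ * M]mulrC.
by rewrite ler_wpM2r ?hnorm_ge0 ?hM.
Qed.

Lemma adj_opK T : bounded_op T -> adj (adj T) = T.
Proof.
move=> hT; apply: adj_op_unique => x y.
by rewrite (ip_conj H y) -(adj_opP hT) -ip_conj.
Qed.

Lemma adj_opM T S : bounded_op T -> bounded_op S ->
  adj (op_mul T S) = op_mul (adj S) (adj T).
Proof.
by move=> hT hS; apply: adj_op_unique => x y; rewrite /op_mul (adj_opP hT) (adj_opP hS).
Qed.

Lemma adj_opD T S : bounded_op T -> bounded_op S ->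
  adj (op_add T S) = op_add (adj T) (adj S).
Proof.
move=> hT hS; apply: adj_op_unique => x y.
by rewrite /op_add ipDl ipDr (adj_opP hT) (adj_opP hS).
Qed.

Lemma adj_opZ a T : bounded_op T -> adj (op_scale a T) = op_scale (conjc a) (adj T).
Proof.
move=> hT; apply: adj_op_unique => x y.
by rewrite /op_scale ipZl ipZr conjcK (adj_opP hT).
Qed.

End Adjoint.

Section NumericalRadius.
Variables (R : realType) (V : lmodType R[i]) (H : hilbert_space V).
Local Notation bounded_op := (bounded_op H).
Local Notation adj := (adj H).
Local Notation ReOp := (ReOp H).
Variable N : (V -> V) -> R.

Lemma wN_expi_scale s X : wN H N (op_scale (expi s) X) = wN H N X.
Proof.
have scaleA t : op_scale (expi t) (op_scale (expi s) X) = op_scale (expi (t + s)) X.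
  by apply: funext => x; rewrite /op_scale scalerA expiD.
rewrite /wN; congr sup; apply/seteqP; split => _ [t _ <-].
  by exists (t + s) => //; rewrite scaleA.
by exists (t - s) => //; rewrite scaleA subrK.
Qed.

Lemma ReOp_scale_sandwich c T S : bounded_op T -> bounded_op S ->
  ReOp (op_scale c (op_add (op_mul T S) (op_mul S (adj T))))
  = op_add (op_mul T (ReOp (op_scale c S))) (op_mul (ReOp (op_scale c S)) (adj T)).
Proof.
move=> hT hS; have hTa := bounded_op_adj hT.
have hTS := bounded_opM hT hS; have hSTa := bounded_opM hS hTa.
rewrite /ReOp (adj_opZ c (bounded_opD hTS hSTa)) (adj_opZ c hS) (adj_opD hTS hSTa).
rewrite (adj_opM hT hS) (adj_opM hS hTa) (adj_opK hT).
apply: funext => x; rewrite /op_scale /op_add /op_mul.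
case: hT => [TD [TZ _]]; rewrite TZ TD !TZ -scalerDr; congr (_ *: _).
by rewrite !scalerDr [conjc c *: _ + _]addrC addrACA.
Qed.

Hypothesis N_alg : algebra_norm H N.

Lemma algnorm_ge0 X : bounded_op X -> 0 <= N X.
Proof. by case: N_alg => + _; apply. Qed.

Lemma algnormZ a X : bounded_op X -> N (op_scale a X) = normc a * N X.
Proof. by case: N_alg => _ [_ [+ _]]; apply. Qed.

Lemma algnormD X Y : bounded_op X -> bounded_op Y -> N (op_add X Y) <= N X + N Y.
Proof. by case: N_alg => _ [_ [_ [+ _]]]; apply. Qed.

Lemma algnormM X Y : bounded_op X -> bounded_op Y -> N (op_mul X Y) <= N X * N Y.
Proof. by case: N_alg => _ [_ [_ [_ +]]]; apply. Qed.

Lemma bounded_op_ReOp X : bounded_op X -> bounded_op (ReOp X).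
Proof. by move=> hX; apply/bounded_opZ/bounded_opD/bounded_op_adj. Qed.

Lemma algnorm_ReOp_le_wN t S : bounded_op S ->
  N (ReOp (op_scale (expi t) S)) <= wN H N S.
Proof.
move=> hS; apply: ub_le_sup; last by exists t.
exists (normc (2%:R^-1 : R[i]) * (N S + N (adj S))) => _ [s _ <-].
have hSs := bounded_opZ (expi s) hS.
rewrite /ReOp algnormZ; last by apply/bounded_opD/bounded_op_adj.
apply: ler_wpM2l; first exact: normc_ge0.
apply: le_trans (algnormD hSs (bounded_op_adj hSs)) _.
have hSa := bounded_op_adj hS.
by rewrite adj_opZ // !algnormZ // (normc_conjc (expi s)) normc_expi !mul1r.
Qed.

Lemma wN_sandwich_le T S : bounded_op T -> bounded_op S ->
  wN H N (op_add (op_mul T S) (op_mul S (adj T))) <= wN H N S * (N T + N (adj T)).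
Proof.
move=> hT hS; have hTa := bounded_op_adj hT.
apply: ge_sup; first by eexists; exists 0.
move=> _ [t _ <-]; rewrite ReOp_scale_sandwich //.
have hX := bounded_op_ReOp (bounded_opZ (expi t) hS).
apply: le_trans (algnormD (bounded_opM hT hX) (bounded_opM hX hTa)) _.
apply: le_trans (lerD (algnormM hT hX) (algnormM hX hTa)) _.
have hNX := algnorm_ReOp_le_wN t hS.
rewrite mulrDr (mulrC (wN H N S)).
by apply: lerD; [apply: ler_wpM2l | apply: ler_wpM2r]; rewrite ?algnorm_ge0.
Qed.

Lemma sandwich_scale_i T S : bounded_op T -> bounded_op S ->
  op_add (op_mul (op_scale 'i T) S) (op_mul S (adj (op_scale 'i T)))
  = op_scale 'i (op_add (op_mul T S) (op_opp (op_mul S (adj T)))).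
Proof.
move=> hT [_ [SZ _]]; rewrite adj_opZ //.
apply: funext => x; rewrite /op_add /op_mul /op_scale /op_opp SZ.
by rewrite scalerDr scalerN -scaleNr; congr (_ + _ *: _); apply: conjc_i.
Qed.

End NumericalRadius.

Theorem theorem2p5 (R : realType) (V : lmodType R[i]) (H : hilbert_space V)
    (N : (V -> V) -> R) (T S : V -> V) :
  algebra_norm H N -> bounded_op H T -> bounded_op H S ->
  [/\ wN H N (op_add (op_mul T S) (op_mul S (adj H T)))
        <= wN H N S * (N T + N (adj H T)),
      wN H N (op_add (op_mul T S) (op_opp (op_mul S (adj H T))))
        <= wN H N S * (N T + N (adj H T)) &
      (selfadjoint_norm H N ->
        wN H N (op_add (op_mul T S) (op_mul S (adj H T)))
          <= 2%:R * wN H N S * N T /\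
        wN H N (op_add (op_mul T S) (op_opp (op_mul S (adj H T))))
          <= 2%:R * wN H N S * N T)].
Proof.
move=> N_alg hT hS.
have plus := wN_sandwich_le N_alg hT hS.
have minus : wN H N (op_add (op_mul T S) (op_opp (op_mul S (adj H T))))
    <= wN H N S * (N T + N (adj H T)).
  rewrite -(wN_expi_scale H N (pi / 2%:R)) expi_pihalf -sandwich_scale_i //.
  apply: le_trans (wN_sandwich_le N_alg (bounded_opZ 'i hT) hS) _.
  have hTa := bounded_op_adj hT.
  by rewrite adj_opZ // !(algnormZ N_alg) // (normc_conjc 'i) normc_i !mul1r.
split => // N_sa.
have -> : 2%:R * wN H N S * N T = wN H N S * (N T + N (adj H T)).
  by rewrite N_sa //; ring.
by split.
Qed.
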